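(* If $(\Sigma,*,\mathsf{emp})$ is a separation algebra, then $(\mathsf{HST},*,\mathsf{emphst})$ is a separation algebra, where $\mathsf{HST}=\mathsf{H}_\varepsilon.\Sigma$ with $\mathsf{H}_\varepsilon=(\Sigma^+.\mathsf{COM})^*.\Sigma^*$, the product $\mathit{hst}_1.s_1*\mathit{hst}_2.s_2$ is defined iff $\mathit{hst}_1=\mathit{hst}_2$ and $s_1*s_2$ is defined, in which case it equals $\mathit{hst}_1.(s_1*s_2)$, and $\mathsf{emphst}=\mathsf{H}_\varepsilon.\mathsf{emp}$.
   Context: A separation algebra $(\Sigma,*,\mathsf{emp})$ is a partial commutative monoid with a set of units $\mathsf{emp}$ such that every $s\in\Sigma$ has a unit $1$ with $s*1=s$ and $1*1'$ is undefined for distinct units $1,1'$. $\mathsf{COM}$ is an arbitrary (possibly infinite) set of commands, disjoint from $\Sigma$. Histories are finite words interleaving nonempty sequences of states with commands and ending in a state; concatenation is written with dots. *)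

From Stdlib Require Import List.
Import ListNotations.
Set Implicit Arguments.

(* A partial binary operation on T is represented by its graph
   [join a b c] : "a * b is defined and equals c". *)
Definition partial_fun (T : Type) (join : T -> T -> T -> Prop) : Prop :=
  forall a b c c', join a b c -> join a b c' -> c = c'.

Record sep_alg (T : Type) (join : T -> T -> T -> Prop) (emp : T -> Prop) : Prop := {
  sa_fun : partial_fun join;
  sa_comm : forall a b c, join a b c -> join b a c;
  sa_assoc : forall a b c ab abc, join a b ab -> join ab c abc ->
      exists bc, join b c bc /\ join a bc abc;
  sa_unit : forall u s t, emp u -> join s u t -> t = s;
  sa_unit_ex : forall s, exists u, emp u /\ join s u s;
  sa_unit_disj : forall u u' t, emp u -> emp u' -> u <> u' -> ~ join u u' t
}.

(* Words over the disjoint alphabet Sigma + COM (states are [inl], commands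
   [inr]). *)
Definition letter (S C : Type) := (S + C)%type.

(* H_eps = (Sigma^+ . COM)^* . Sigma^* *)
Inductive Heps (S C : Type) : list (letter S C) -> Prop :=
| Heps_states (ss : list S) : Heps (map inl ss)
| Heps_block (s : S) (ss : list S) (c : C) (h : list (letter S C)) :
    Heps h -> Heps (map inl (s :: ss) ++ inr c :: h).

Definition isHST (S C : Type) (w : list (letter S C)) : Prop :=
  exists h s, Heps h /\ w = h ++ [inl s].

Definition HST (S C : Type) := { w : list (letter S C) | isHST w }.

Definition hst_join (S C : Type) (join : S -> S -> S -> Prop)
    (w1 w2 w3 : HST S C) : Prop :=
  exists h s1 s2 s3,
    proj1_sig w1 = h ++ [inl s1] /\ proj1_sig w2 = h ++ [inl s2] /\
    proj1_sig w3 = h ++ [inl s3] /\ join s1 s2 s3.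

Definition emphst (S C : Type) (emp : S -> Prop) (w : HST S C) : Prop :=
  exists h u, Heps h /\ emp u /\ proj1_sig w = h ++ [inl u].

(* HST splits into the disjoint copies h.Sigma, one for each h in H_eps, and
   hst_join only combines elements of the same copy, where it is the join of
   Sigma.  Every axiom of a separation algebra therefore transfers from Sigma
   copy by copy; the only extra point is that a new element h.s built from a
   witness in Sigma is again a history, because h is the prefix of an
   existing one. *)
From Stdlib Require Import List ProofIrrelevance.
Import ListNotations.

Section HistoryAlgebra.

Variables (S C : Type) (join : S -> S -> S -> Prop) (emp : S -> Prop).

Lemma snoc_state_inj (h1 h2 : list (letter S C)) (s1 s2 : S) :
  h1 ++ [inl s1] = h2 ++ [inl s2] -> h1 = h2 /\ s1 = s2.
Proof.
  intros E; apply app_inj_tail in E as [-> E].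
  now injection E as ->.
Qed.

Lemma hst_inj (w1 w2 : HST S C) : proj1_sig w1 = proj1_sig w2 -> w1 = w2.
Proof.
  destruct w1 as [x p], w2 as [y q]; simpl; intros <-.
  now rewrite (proof_irrelevance _ p q).
Qed.

Lemma Heps_of_HST {w : HST S C} {h : list (letter S C)} {s : S} :
  proj1_sig w = h ++ [inl s] -> Heps h.
Proof.
  destruct w as [x [h' [s' [Hh ->]]]]; simpl; intros E.
  now apply snoc_state_inj in E as [<- _].
Qed.

Definition hst_snoc {h : list (letter S C)} (s : S) (Hh : Heps h) : HST S C :=
  exist _ (h ++ [inl s]) (ex_intro _ h (ex_intro _ s (conj Hh eq_refl))).

Lemma hst_join_fun : partial_fun join -> partial_fun (hst_join (C:=C) join).
Proof.
  intros Hf w1 w2 w3 w3' [h [s1 [s2 [s3 [E1 [E2 [E3 J]]]]]]]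
    [h' [s1' [s2' [s3' [E1' [E2' [E3' J']]]]]]].
  rewrite E1 in E1'; rewrite E2 in E2'.
  apply snoc_state_inj in E1' as [<- <-]; apply snoc_state_inj in E2' as [_ <-].
  apply hst_inj; rewrite E3, E3'.
  now rewrite (Hf _ _ _ _ J J').
Qed.

Lemma hst_join_comm :
  (forall a b c, join a b c -> join b a c) ->
  forall w1 w2 w3, hst_join (C:=C) join w1 w2 w3 -> hst_join join w2 w1 w3.
Proof.
  intros Hc w1 w2 w3 [h [s1 [s2 [s3 [E1 [E2 [E3 J]]]]]]].
  exists h, s2, s1, s3; auto.
Qed.

Lemma hst_join_assoc :
  (forall a b c ab abc, join a b ab -> join ab c abc ->
     exists bc, join b c bc /\ join a bc abc) ->
  forall w1 w2 w3 w12 w123,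
    hst_join (C:=C) join w1 w2 w12 -> hst_join join w12 w3 w123 ->
    exists w23, hst_join join w2 w3 w23 /\ hst_join join w1 w23 w123.
Proof.
  intros Ha w1 w2 w3 w12 w123 [h [s1 [s2 [s12 [E1 [E2 [E12 J]]]]]]]
    [h' [s12' [s3 [s123 [E12' [E3 [E123 J']]]]]]].
  rewrite E12 in E12'; apply snoc_state_inj in E12' as [<- <-].
  destruct (Ha _ _ _ _ _ J J') as [s23 [J23 J123]].
  exists (hst_snoc s23 (Heps_of_HST E2)); split.
  - exists h, s2, s3, s23; auto.
  - exists h, s1, s23, s123; auto.
Qed.

Lemma emphst_unit :
  (forall u s t, emp u -> join s u t -> t = s) ->
  forall u w t, emphst (C:=C) emp u -> hst_join join w u t -> t = w.
Proof.
  intros Hu u w t [h0 [u0 [_ [Eu E0]]]] [h [s [u' [s' [Ew [Eu' [Et J]]]]]]].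
  rewrite E0 in Eu'; apply snoc_state_inj in Eu' as [_ <-].
  apply hst_inj; rewrite Et, Ew.
  now rewrite (Hu _ _ _ Eu J).
Qed.

Lemma emphst_unit_ex :
  (forall s, exists u, emp u /\ join s u s) ->
  forall w : HST S C, exists u, emphst emp u /\ hst_join join w u w.
Proof.
  intros Hue [w [h [s [Hh Ew]]]].
  destruct (Hue s) as [u [Eu Ju]].
  exists (hst_snoc u Hh); split.
  - exists h, u; auto.
  - exists h, s, u, s; auto.
Qed.

Lemma emphst_unit_disj :
  (forall u u' t, emp u -> emp u' -> u <> u' -> ~ join u u' t) ->
  forall u u' t, emphst (C:=C) emp u -> emphst emp u' -> u <> u' ->
    ~ hst_join join u u' t.
Proof.
  intros Hud u u' t [h1 [s1 [_ [Es1 E1]]]] [h2 [s2 [_ [Es2 E2]]]] Hne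
    [h [s1' [s2' [s3 [F1 [F2 [_ J]]]]]]].
  rewrite E1 in F1; rewrite E2 in F2.
  apply snoc_state_inj in F1 as [-> <-]; apply snoc_state_inj in F2 as [-> <-].
  refine (Hud _ _ _ Es1 Es2 _ J).
  intros <-; apply Hne, hst_inj; congruence.
Qed.

End HistoryAlgebra.

Theorem lemma4p7 (S COM : Type) (join : S -> S -> S -> Prop) (emp : S -> Prop) :
  sep_alg join emp -> sep_alg (hst_join (C:=COM) join) (emphst (C:=COM) emp).
Proof.
  intros [Hf Hc Ha Hu Hue Hud]; split.
  - now apply hst_join_fun.
  - now apply hst_join_comm.
  - now apply hst_join_assoc.
  - now apply emphst_unit.
  - now apply emphst_unit_ex.
  - now apply emphst_unit_disj.
Qed.
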